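(* Let $\{X_s,\|\cdot\|_s\}_{s\in\mathbb N_0}$ be a sequence of Banach spaces satisfying (F1)–(F3), let $\Theta$ be a $BK$-space, and let $\{g_i\}_{i=1}^\infty\in(X_0^* )^{\mathbb N}$ satisfy the lower $\Theta$-frame condition for $X_0$: there is $A>0$ with $\{g_i(f)\}_{i=1}^\infty\in\Theta$ and $A\|f\|_0\le|||\{g_i(f)\}_{i=1}^\infty|||_\Theta$ for every $f\in X_0$. For $s\in\mathbb N_0$ define $\Theta_s:=\{\{g_i(f)\}_{i=1}^\infty:f\in X_s\}$ with norm $|||\{g_i(f)\}_{i=1}^\infty|||_s:=\|f\|_s$. Then: (a) $\{\Theta_s\}_{s\in\mathbb N_0}$ is a sequence of $BK$-spaces satisfying (F1)–(F3), and $\{g_i|_{X_F}\}_{i=1}^\infty$ is an $F$-frame for $X_F$ with respect to $\Theta_F$ with bounds $A_s=B_s=1$, $s\in\mathbb N_0$; (b) if $\{g_i\}$ has a biorthogonal sequence $\{f_i\}_{i=1}^\infty\in(X_F)^{\mathbb N}$ (i.e. $g_i(f_j)=\delta_{ij}$), then for each $s\in\mathbb N_0$, $\Theta_s$ is a $CB$-space if and only if $\{f_i\}$ is a Schauder basis of $X_s$.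
   Context: Conditions (F1)–(F3) for a sequence $\{Y_s,|\cdot|_s\}_{s\in\mathbb N_0}$ of separable Banach spaces: (F1) $\{0\}\neq\bigcap_sY_s\subseteq\dots\subseteq Y_1\subseteq Y_0$; (F2) $|\cdot|_0\le|\cdot|_1\le\dots$; (F3) $Y_F:=\bigcap_sY_s$ dense in each $Y_s$. $X_F=\bigcap_sX_s$, $\Theta_F=\bigcap_s\Theta_s$. $BK$-space: Banach sequence space with continuous coordinate functionals; $CB$-space: $BK$-space in which the canonical vectors $e_i=\{\delta_{ki}\}_k$ form a Schauder basis. $F$-frame for $X_F$ w.r.t. $\Theta_F$ with bounds $A_s,B_s$: $\{g_i\}\in(X_F^* )^{\mathbb N}$ with $\{g_i(f)\}\in\Theta_F$ and $A_s\|f\|_s\le|||\{g_i(f)\}|||_s\le B_s\|f\|_s$ for all $f\in X_F$, $s\in\mathbb N_0$, together with an operator $V:\Theta_F\to X_F$ with $V(\{g_i(f)\})=f$ for $f\in X_F$ that is $F$-bounded: $\|Vc\|_s\le K_s|||c|||_s$ for each $s$. *)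

From Stdlib Require Import Reals Lra ClassicalEpsilon.
Open Scope R_scope.

Section Gen.
Context {V : Type} (z : V) (add : V -> V -> V) (scal : R -> V -> V).

Definition vsub (x y : V) : V := add x (scal (-1) y).

Definition is_vector_space : Prop :=
  (forall x y w, add x (add y w) = add (add x y) w) /\
  (forall x y, add x y = add y x) /\
  (forall x, add x z = x) /\
  (forall x, add x (scal (-1) x) = z) /\
  (forall x, scal 1 x = x) /\
  (forall a b x, scal a (scal b x) = scal (a * b) x) /\
  (forall a x y, scal a (add x y) = add (scal a x) (scal a y)) /\
  (forall a b x, scal (a + b) x = add (scal a x) (scal b x)).

Definition is_subspace (S : V -> Prop) : Prop :=
  S z /\ (forall x y, S x -> S y -> S (add x y)) /\
  (forall a x, S x -> S (scal a x)).

Definition is_norm_on (S : V -> Prop) (n : V -> R) : Prop :=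
  (forall x, S x -> 0 <= n x) /\
  (forall x, S x -> n x = 0 -> x = z) /\
  (forall a x, S x -> n (scal a x) = Rabs a * n x) /\
  (forall x y, S x -> S y -> n (add x y) <= n x + n y).

Definition is_complete (S : V -> Prop) (n : V -> R) : Prop :=
  forall u : nat -> V, (forall k, S (u k)) ->
    (forall eps, 0 < eps -> exists N, forall p q, (N <= p)%nat -> (N <= q)%nat ->
        n (vsub (u p) (u q)) < eps) ->
    exists x, S x /\ forall eps, 0 < eps -> exists N, forall p, (N <= p)%nat ->
        n (vsub (u p) x) < eps.

Definition is_Banach (S : V -> Prop) (n : V -> R) : Prop :=
  is_subspace S /\ is_norm_on S n /\ is_complete S n.

Definition is_separable (S : V -> Prop) (n : V -> R) : Prop :=
  exists d : nat -> V, (forall k, S (d k)) /\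
    forall x, S x -> forall eps, 0 < eps -> exists k, n (vsub x (d k)) < eps.

Definition capF (Y : nat -> V -> Prop) (x : V) : Prop := forall s, Y s x.

Definition F_conditions (Y : nat -> V -> Prop) (n : nat -> V -> R) : Prop :=
  (forall s, is_Banach (Y s) (n s) /\ is_separable (Y s) (n s)) /\
  (exists x, capF Y x /\ x <> z) /\
  (forall s x, Y (S s) x -> Y s x) /\
  (forall s x, Y (S s) x -> n s x <= n (S s) x) /\
  (forall s x, Y s x -> forall eps, 0 < eps ->
     exists y, capF Y y /\ n s (vsub x y) < eps).

Fixpoint psum (a : nat -> R) (x : nat -> V) (N : nat) : V :=
  match N with
  | O => z
  | S N' => add (psum a x N') (scal (a N') (x N'))
  end.

Definition series_conv_to (n : V -> R) (a : nat -> R) (x : nat -> V) (y : V) : Prop :=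
  forall eps, 0 < eps -> exists N0, forall N, (N0 <= N)%nat ->
    n (vsub (psum a x N) y) < eps.

Definition is_Schauder_basis (S : V -> Prop) (n : V -> R) (x : nat -> V) : Prop :=
  (forall i, S (x i)) /\
  forall y, S y -> exists! a : nat -> R, series_conv_to n a x y.

Definition is_linear_on {W : Type} (S : W -> Prop) (addW : W -> W -> W)
  (scalW : R -> W -> W) (h : W -> V) : Prop :=
  (forall x y, S x -> S y -> h (addW x y) = add (h x) (h y)) /\
  (forall a x, S x -> h (scalW a x) = scal a (h x)).

End Gen.

(* Sequence spaces: sequences indexed by nat (index i corresponds to i+1 in the paper) *)
Definition seq0 : nat -> R := fun _ => 0.
Definition seqadd (c d : nat -> R) : nat -> R := fun i => c i + d i.
Definition seqscal (a : R) (c : nat -> R) : nat -> R := fun i => a * c i.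

Definition canon (i : nat) : nat -> R := fun k => if Nat.eqb k i then 1 else 0.

Definition is_BK (Th : (nat -> R) -> Prop) (tn : (nat -> R) -> R) : Prop :=
  is_Banach seq0 seqadd seqscal Th tn /\
  forall i, exists C, forall c, Th c -> Rabs (c i) <= C * tn c.

Definition is_CB (Th : (nat -> R) -> Prop) (tn : (nat -> R) -> R) : Prop :=
  is_BK Th tn /\ is_Schauder_basis seq0 seqadd seqscal Th tn canon.

Definition is_cont_lin_functional {V : Type} (add : V -> V -> V) (scal : R -> V -> V)
  (S : V -> Prop) (n : V -> R) (g : V -> R) : Prop :=
  (forall x y, S x -> S y -> g (add x y) = g x + g y) /\
  (forall a x, S x -> g (scal a x) = a * g x) /\
  (exists C, forall x, S x -> Rabs (g x) <= C * n x).

Definition is_F_dual_elt {V : Type} (add : V -> V -> V) (scal : R -> V -> V)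
  (X : nat -> V -> Prop) (n : nat -> V -> R) (g : V -> R) : Prop :=
  (forall x y, capF X x -> capF X y -> g (add x y) = g x + g y) /\
  (forall a x, capF X x -> g (scal a x) = a * g x) /\
  (exists s C, forall x, capF X x -> Rabs (g x) <= C * n s x).

Definition coeffs {V : Type} (g : nat -> V -> R) (f : V) : nat -> R := fun i => g i f.

Definition is_F_frame {V : Type} (add : V -> V -> V) (scal : R -> V -> V)
  (X : nat -> V -> Prop) (n : nat -> V -> R)
  (Th : nat -> (nat -> R) -> Prop) (tn : nat -> (nat -> R) -> R)
  (g : nat -> V -> R) (A B : nat -> R) : Prop :=
  (forall i, is_F_dual_elt add scal X n (g i)) /\
  (forall f, capF X f -> capF Th (coeffs g f)) /\
  (forall s f, capF X f ->
     A s * n s f <= tn s (coeffs g f) <= B s * n s f) /\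
  exists Vop : (nat -> R) -> V,
    (forall c, capF Th c -> capF X (Vop c)) /\
    is_linear_on add scal (capF Th) seqadd seqscal Vop /\
    (forall f, capF X f -> Vop (coeffs g f) = f) /\
    exists K : nat -> R, forall s c, capF Th c -> n s (Vop c) <= K s * tn s c.

Definition Theta_s {V : Type} (X : nat -> V -> Prop) (g : nat -> V -> R)
  (s : nat) (c : nat -> R) : Prop :=
  exists f, X s f /\ forall i, g i f = c i.

(* |||(g_i(f))_i|||_s := ||f||_s  (f is chosen; it is unique under the lower frame bound) *)
Definition theta_norm {V : Type} (z : V) (X : nat -> V -> Prop) (n : nat -> V -> R)
  (g : nat -> V -> R) (s : nat) (c : nat -> R) : R :=
  n s (epsilon (inhabits z) (fun f => X s f /\ forall i, g i f = c i)).

From Stdlib Require Import Reals Lra FunctionalExtensionality ClassicalEpsilon.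
Open Scope R_scope.

(* The analysis operator [T f = (g_i f)_i] is linear on [X_0] and, by the
   lower frame bound [A ||f||_0 <= |||T f|||_Theta], injective there.  Hence
   each [Theta_s = T(X_s)] with [|||T f|||_s = ||f||_s] is an isometric copy
   of [X_s], and every property in question is transported along [T]: *)

Lemma ex_unique_iff {A : Type} (P Q : A -> Prop) :
  (forall a, P a <-> Q a) -> (exists! a, P a) -> exists! a, Q a.
Proof.
  intros PQ (a & Pa & Puniq).
  exists a; split; [apply PQ, Pa|].
  intros b Qb; apply Puniq, PQ, Qb.
Qed.

Lemma vsub_eq_zero {V : Type} {z : V} {add : V -> V -> V} {scal : R -> V -> V} :
  is_vector_space z add scal -> forall x y, vsub add scal x y = z -> x = y.
Proof.
  intros (vA & vC & v0 & vN & _) x y H; unfold vsub in H.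
  rewrite <- (v0 y), <- H, vA, (vC y x), <- vA, vN, v0.
  reflexivity.
Qed.

Definition isometric_image {V W : Type} (U : V -> Prop) (T : V -> W)
  (n : V -> R) (I : W -> Prop) (m : W -> R) : Prop :=
  (forall f, U f -> I (T f)) /\
  (forall w, I w -> exists f, U f /\ w = T f) /\
  (forall f, U f -> m (T f) = n f).

Section IsometricImage.

Context {V W : Type} {zV : V} {addV : V -> V -> V} {scalV : R -> V -> V}
  {zW : W} {addW : W -> W -> W} {scalW : R -> W -> W}.
Hypothesis HV : is_vector_space zV addV scalV.
Hypothesis HW : is_vector_space zW addW scalW.

Context {U : V -> Prop} {T : V -> W}.
Hypothesis U_sub : is_subspace zV addV scalV U.
Hypothesis T_lin : is_linear_on addW scalW U addV scalV T.

Lemma linear_zero : T zV = zW.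
Proof.
  destruct HV as (_ & _ & _ & vNV & _), HW as (_ & _ & _ & vNW & _).
  destruct U_sub as (Uz & _ & Uscal), T_lin as (Tadd & Tscal).
  rewrite <- (vNV zV) at 1.
  rewrite Tadd, Tscal; auto.
Qed.

Lemma linear_vsub x y : U x -> U y ->
  T (vsub addV scalV x y) = vsub addW scalW (T x) (T y).
Proof.
  destruct U_sub as (_ & _ & Uscal), T_lin as (Tadd & Tscal).
  intros Ux Uy; unfold vsub.
  rewrite Tadd, Tscal; auto.
Qed.

Lemma linear_psum (a : nat -> R) (e : nat -> V) : (forall j, U (e j)) ->
  forall N, U (psum zV addV scalV a e N) /\
            T (psum zV addV scalV a e N) = psum zW addW scalW a (fun j => T (e j)) N.
Proof.
  destruct U_sub as (Uz & Uadd & Uscal), T_lin as (Tadd & Tscal).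
  intros Ue N; induction N as [|N [UN TN]]; simpl.
  - split; [exact Uz | exact linear_zero].
  - split; [auto|].
    rewrite Tadd, Tscal, TN; auto.
Qed.

Lemma lower_bound_injective (n : V -> R) (tn : W -> R) (A : R) :
  is_norm_on zV addV scalV U n -> tn zW = 0 -> 0 < A ->
  (forall f, U f -> A * n f <= tn (T f)) ->
  forall x y, U x -> U y -> T x = T y -> x = y.
Proof.
  intros (npos & ndef & _) tn0 HA Hlow x y Ux Uy Txy.
  assert (Ud : U (vsub addV scalV x y))
    by (destruct U_sub as (_ & Uadd & Uscal); unfold vsub; auto).
  assert (Td : T (vsub addV scalV x y) = zW).
  { rewrite linear_vsub, Txy by assumption.
    destruct HW as (_ & _ & _ & vNW & _); apply vNW. }
  apply (vsub_eq_zero HV), ndef; [exact Ud|].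
  specialize (Hlow _ Ud); rewrite Td, tn0 in Hlow.
  specialize (npos _ Ud); nra.
Qed.

Context {n : V -> R} {I : W -> Prop} {m : W -> R}.
Hypothesis Himg : isometric_image U T n I m.

Lemma image_dist x y : U x -> U y ->
  m (vsub addW scalW (T x) (T y)) = n (vsub addV scalV x y).
Proof.
  destruct Himg as (_ & _ & mT), U_sub as (_ & Uadd & Uscal).
  intros Ux Uy; rewrite <- linear_vsub by assumption.
  apply mT; unfold vsub; auto.
Qed.

Lemma image_subspace : is_subspace zW addW scalW I.
Proof.
  destruct Himg as (Iimg & Ipre & _), U_sub as (Uz & Uadd & Uscal),
    T_lin as (Tadd & Tscal).
  split; [|split].
  - rewrite <- linear_zero; auto.
  - intros w1 w2 (f1 & U1 & ->)%Ipre (f2 & U2 & ->)%Ipre.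
    rewrite <- Tadd by assumption; auto.
  - intros a w (f & Uf & ->)%Ipre.
    rewrite <- Tscal by assumption; auto.
Qed.

Lemma image_norm : is_norm_on zV addV scalV U n -> is_norm_on zW addW scalW I m.
Proof.
  destruct Himg as (_ & Ipre & mT), U_sub as (_ & Uadd & Uscal),
    T_lin as (Tadd & Tscal).
  intros (npos & ndef & nscal & ntri); split; [|split; [|split]].
  - intros w (f & Uf & ->)%Ipre; rewrite mT; auto.
  - intros w (f & Uf & ->)%Ipre Hm.
    rewrite mT in Hm by assumption.
    rewrite (ndef f Uf Hm); apply linear_zero.
  - intros a w (f & Uf & ->)%Ipre.
    rewrite <- Tscal, !mT; auto.
  - intros w1 w2 (f1 & U1 & ->)%Ipre (f2 & U2 & ->)%Ipre.
    rewrite <- Tadd, !mT; auto.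
Qed.

(* Completeness transfers: a Cauchy sequence in [I] lifts to a Cauchy
   sequence in [U], whose limit is mapped to a limit in [I]. *)
Lemma image_complete : is_complete addV scalV U n -> is_complete addW scalW I m.
Proof.
  destruct Himg as (Iimg & Ipre & _).
  intros Ucompl u Iu Hcauchy.
  destruct (choice (fun k f => U f /\ u k = T f) (fun k => Ipre _ (Iu k)))
    as (F & HF).
  destruct (Ucompl F) as (x & Ux & Hlim).
  - intro k; apply HF.
  - intros eps Heps; destruct (Hcauchy eps Heps) as (N & HN).
    exists N; intros p q Hp Hq.
    rewrite <- image_dist by apply HF.
    destruct (HF p) as (_ & <-), (HF q) as (_ & <-); auto.
  - exists (T x); split; [auto|].
    intros eps Heps; destruct (Hlim eps Heps) as (N & HN).
    exists N; intros p Hp.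
    destruct (HF p) as (Up & ->); rewrite image_dist; auto.
Qed.

Lemma image_Banach : is_Banach zV addV scalV U n -> is_Banach zW addW scalW I m.
Proof.
  intros (_ & Hnorm & Hcompl).
  split; [exact image_subspace|].
  split; [apply image_norm | apply image_complete]; assumption.
Qed.

Lemma image_separable : is_separable addV scalV U n -> is_separable addW scalW I m.
Proof.
  destruct Himg as (Iimg & Ipre & _).
  intros (d & Ud & Hdense).
  exists (fun k => T (d k)); split; [auto|].
  intros w (f & Uf & ->)%Ipre eps Heps.
  destruct (Hdense f Uf eps Heps) as (k & Hk).
  exists k; rewrite image_dist; auto.
Qed.

Lemma series_conv_image (a : nat -> R) (e : nat -> V) (y : V) :
  (forall j, U (e j)) -> U y ->
  series_conv_to zW addW scalW m a (fun j => T (e j)) (T y) <->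
  series_conv_to zV addV scalV n a e y.
Proof.
  intros Ue Uy.
  assert (Hdist : forall N,
    m (vsub addW scalW (psum zW addW scalW a (fun j => T (e j)) N) (T y)) =
    n (vsub addV scalV (psum zV addV scalV a e N) y)).
  { intro N; destruct (linear_psum a e Ue N) as (UN & <-).
    apply image_dist; assumption. }
  unfold series_conv_to; split;
    intros H eps Heps; destruct (H eps Heps) as (N0 & HN);
    exists N0; intros N HN0; specialize (HN N HN0); rewrite Hdist in *; exact HN.
Qed.

Lemma image_Schauder (e : nat -> V) : (forall j, U (e j)) ->
  is_Schauder_basis zW addW scalW I m (fun j => T (e j)) <->
  is_Schauder_basis zV addV scalV U n e.
Proof.
  destruct Himg as (Iimg & Ipre & _).
  intros Ue; split; intros (_ & Hexp); split; auto.
  - intros y Uy.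
    apply (ex_unique_iff _ _ (fun a => series_conv_image a e y Ue Uy)).
    apply Hexp; auto.
  - intros w (y & Uy & ->)%Ipre.
    apply (ex_unique_iff _ _ (fun a => iff_sym (series_conv_image a e y Ue Uy))).
    apply Hexp; auto.
Qed.

End IsometricImage.

Lemma seq_vector_space : is_vector_space seq0 seqadd seqscal.
Proof.
  unfold seq0, seqadd, seqscal.
  repeat split; intros; extensionality i; lra.
Qed.

Lemma seq_norm_zero {Th : (nat -> R) -> Prop} {tn : (nat -> R) -> R} :
  is_subspace seq0 seqadd seqscal Th -> is_norm_on seq0 seqadd seqscal Th tn ->
  tn seq0 = 0.
Proof.
  intros (Th0 & _) (_ & _ & tscal & _).
  replace seq0 with (seqscal 0 seq0)
    by (extensionality i; unfold seqscal, seq0; lra).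
  rewrite tscal by exact Th0; rewrite Rabs_R0; lra.
Qed.

Lemma decreasing_in_base {V : Type} (X : nat -> V -> Prop) (n : nat -> V -> R) :
  (forall s x, X (S s) x -> X s x) ->
  (forall s x, X (S s) x -> n s x <= n (S s) x) ->
  forall s x, X s x -> X 0%nat x /\ n 0%nat x <= n s x.
Proof.
  intros Hdec Hmon s; induction s as [|s IH]; intros x Hx.
  - split; [exact Hx | lra].
  - destruct (IH x (Hdec s x Hx)) as (H0 & Hle).
    specialize (Hmon s x Hx); split; [exact H0 | lra].
Qed.

Section CoefficientSpaces.

Context {V : Type} {z : V} {add : V -> V -> V} {scal : R -> V -> V}
  {X : nat -> V -> Prop} {nrm : nat -> V -> R} {g : nat -> V -> R}.
Hypothesis HV : is_vector_space z add scal.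
Hypothesis HF : F_conditions z add scal X nrm.
Hypothesis g_cont : forall i, is_cont_lin_functional add scal (X 0%nat) (nrm 0%nat) (g i).
(* Consequence of the lower frame bound: the analysis operator is one-to-one. *)
Hypothesis coeffs_inj : forall x y, X 0%nat x -> X 0%nat y ->
  coeffs g x = coeffs g y -> x = y.

Lemma X_Banach s : is_Banach z add scal (X s) (nrm s).
Proof. apply (proj1 HF s). Qed.

Lemma X_subspace s : is_subspace z add scal (X s).
Proof. apply X_Banach. Qed.

(* By (F1) and (F2), [X_s] lies in [X_0] with [||.||_0 <= ||.||_s]. *)
Lemma X_in_base s x : X s x -> X 0%nat x /\ nrm 0%nat x <= nrm s x.
Proof.
  destruct HF as (_ & _ & Hdec & Hmon & _).
  apply decreasing_in_base; assumption.
Qed.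

Lemma coeffs_linear s : is_linear_on seqadd seqscal (X s) add scal (coeffs g).
Proof.
  split; intros; extensionality i; unfold coeffs, seqadd, seqscal;
    apply (g_cont i); apply (X_in_base s); auto.
Qed.

(* [Theta_s] with its norm is the isometric image of [X_s] under the
   analysis operator; [theta_norm] is well defined by injectivity. *)
Lemma Theta_s_image s : isometric_image (X s) (coeffs g) (nrm s)
  (Theta_s X g s) (theta_norm z X nrm g s).
Proof.
  split; [|split].
  - intros f Xf; exists f; split; [exact Xf | reflexivity].
  - intros c (f & Xf & Hc); exists f; split; [exact Xf|].
    extensionality i; symmetry; apply Hc.
  - intros f Xf; unfold theta_norm.
    destruct (epsilon_spec (inhabits z) (fun h => X s h /\ forall i, g i h = coeffs g f i))
      as (Xh & Hh); [exists f; split; [exact Xf | reflexivity]|].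
    f_equal; apply coeffs_inj; [apply (X_in_base s _ Xh) | apply (X_in_base s _ Xf)|].
    extensionality i; apply Hh.
Qed.

Lemma Theta_s_Banach s : is_Banach seq0 seqadd seqscal (Theta_s X g s) (theta_norm z X nrm g s).
Proof.
  apply (image_Banach HV seq_vector_space (X_subspace s) (coeffs_linear s) (Theta_s_image s)).
  apply X_Banach.
Qed.

(* Coordinates are continuous: [|g_i f| <= C ||f||_0 <= |C| ||f||_s]. *)
Lemma Theta_s_BK s : is_BK (Theta_s X g s) (theta_norm z X nrm g s).
Proof.
  split; [apply Theta_s_Banach|].
  intro i; destruct (g_cont i) as (_ & _ & C & HC); exists (Rabs C).
  intros c Hc; destruct (Theta_s_image s) as (_ & Ipre & mT).
  destruct (Ipre c Hc) as (f & Xf & ->); rewrite mT by exact Xf; unfold coeffs.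
  destruct (X_in_base s f Xf) as (X0f & Hle).
  assert (0 <= nrm 0%nat f) by (apply (proj1 (proj2 (X_Banach 0%nat))); exact X0f).
  specialize (HC f X0f); pose proof (Rle_abs C); pose proof (Rabs_pos C); nra.
Qed.

Lemma Theta_F_conditions :
  F_conditions seq0 seqadd seqscal (Theta_s X g) (theta_norm z X nrm g).
Proof.
  destruct HF as (HBan & (x0 & Fx0 & x0nz) & Hdec & Hmon & Hdense).
  split; [|split; [|split; [|split]]].
  - intro s; split; [apply Theta_s_Banach|].
    apply (image_separable (X_subspace s) (coeffs_linear s) (Theta_s_image s)), HBan.
  - exists (coeffs g x0); split; [intro s; apply (Theta_s_image s), Fx0|].
    intro Hzero; apply x0nz, coeffs_inj; [apply Fx0 | apply (X_subspace 0%nat)|].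
    rewrite Hzero; symmetry.
    apply (linear_zero HV seq_vector_space (X_subspace 0%nat) (coeffs_linear 0%nat)).
  - intros s c (f & Xf & ->)%(Theta_s_image (S s)).
    apply (Theta_s_image s), Hdec, Xf.
  - intros s c (f & Xf & ->)%(Theta_s_image (S s)).
    rewrite !(proj2 (proj2 (Theta_s_image _))) by auto; apply Hmon, Xf.
  - intros s c (f & Xf & ->)%(Theta_s_image s) eps Heps.
    destruct (Hdense s f Xf eps Heps) as (y & Fy & Hy).
    exists (coeffs g y); split; [intro t; apply (Theta_s_image t), Fy|].
    rewrite (image_dist (X_subspace s) (coeffs_linear s) (Theta_s_image s)); auto.
Qed.

Lemma Theta_F_coeffs c : capF (Theta_s X g) c -> exists f, capF X f /\ c = coeffs g f.
Proof.
  intro Fc; destruct (proj1 (proj2 (Theta_s_image 0%nat)) c (Fc 0%nat)) as (f & X0f & ->).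
  exists f; split; [|reflexivity].
  intro s; destruct (proj1 (proj2 (Theta_s_image s)) _ (Fc s)) as (h & Xh & Hh).
  replace f with h; [exact Xh|].
  apply coeffs_inj; [apply (X_in_base s _ Xh) | exact X0f | symmetry; exact Hh].
Qed.

Definition synthesis (c : nat -> R) : V :=
  epsilon (inhabits z) (fun f => capF X f /\ c = coeffs g f).

Lemma synthesis_spec c : capF (Theta_s X g) c ->
  capF X (synthesis c) /\ c = coeffs g (synthesis c).
Proof. intro Fc; unfold synthesis; apply epsilon_spec, Theta_F_coeffs, Fc. Qed.

Lemma synthesis_coeffs f : capF X f -> synthesis (coeffs g f) = f.
Proof.
  intro Ff.
  destruct (synthesis_spec (coeffs g f)) as (Fs & Hs); [intro s; apply (Theta_s_image s), Ff|].
  apply coeffs_inj; [apply Fs | apply Ff | symmetry; exact Hs].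
Qed.

Lemma synthesis_linear : is_linear_on add scal (capF (Theta_s X g)) seqadd seqscal synthesis.
Proof.
  destruct (coeffs_linear 0%nat) as (cadd & cscal).
  split.
  - intros c d Fc Fd.
    destruct (synthesis_spec c Fc) as (Fsc & Ec), (synthesis_spec d Fd) as (Fsd & Ed).
    assert (E : seqadd c d = coeffs g (add (synthesis c) (synthesis d)))
      by (rewrite cadd by auto; congruence).
    rewrite E; apply synthesis_coeffs.
    intro s; apply (X_subspace s); auto.
  - intros a c Fc; destruct (synthesis_spec c Fc) as (Fsc & Ec).
    assert (E : seqscal a c = coeffs g (scal a (synthesis c)))
      by (rewrite cscal by auto; congruence).
    rewrite E; apply synthesis_coeffs.
    intro s; apply (X_subspace s); auto.
Qed.

Lemma coeffs_F_frame :
  is_F_frame add scal X nrm (Theta_s X g) (theta_norm z X nrm g) g (fun _ => 1) (fun _ => 1).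
Proof.
  assert (norm_eq : forall s f, X s f -> theta_norm z X nrm g s (coeffs g f) = nrm s f)
    by (intro s; apply (Theta_s_image s)).
  split; [|split; [|split]].
  - intro i; destruct (g_cont i) as (gadd & gscal & C & HC).
    split; [|split].
    + intros x y Fx Fy; apply gadd; auto.
    + intros a x Fx; apply gscal; auto.
    + exists 0%nat, C; intros x Fx; apply HC, Fx.
  - intros f Ff s; apply (Theta_s_image s), Ff.
  - intros s f Ff; rewrite norm_eq by apply Ff; lra.
  - exists synthesis; split; [|split; [|split]].
    + intros c Fc; apply synthesis_spec, Fc.
    + exact synthesis_linear.
    + exact synthesis_coeffs.
    + exists (fun _ => 1); intros s c Fc.
      destruct (synthesis_spec c Fc) as (Fsc & Ec).
      rewrite Ec at 2; rewrite norm_eq by apply Fsc; lra.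
Qed.

(* Part (b): for a biorthogonal sequence [{f_j}] the analysis operator maps
   [f_j] to the canonical vector [e_j], so Schauder bases correspond. *)
Lemma Theta_s_CB_iff (f : nat -> V) :
  (forall j, capF X (f j)) ->
  (forall i j, g i (f j) = if Nat.eqb i j then 1 else 0) ->
  forall s, is_CB (Theta_s X g s) (theta_norm z X nrm g s) <->
            is_Schauder_basis z add scal (X s) (nrm s) f.
Proof.
  intros Ff Hbi s.
  assert (Ecanon : (fun j => coeffs g (f j)) = canon)
    by (extensionality j; extensionality i; apply Hbi).
  unfold is_CB; rewrite <- Ecanon.
  rewrite (image_Schauder HV seq_vector_space (X_subspace s) (coeffs_linear s)
             (Theta_s_image s)) by (intro j; apply Ff).
  pose proof (Theta_s_BK s); tauto.
Qed.

End CoefficientSpaces.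

Theorem theorem4p4
  (V : Type) (z : V) (add : V -> V -> V) (scal : R -> V -> V)
  (X : nat -> V -> Prop) (nrm : nat -> V -> R)
  (Theta : (nat -> R) -> Prop) (thnorm : (nat -> R) -> R)
  (g : nat -> V -> R)
  (HV : is_vector_space z add scal)
  (HF : F_conditions z add scal X nrm)
  (HBK : is_BK Theta thnorm)
  (Hg : forall i, is_cont_lin_functional add scal (X 0%nat) (nrm 0%nat) (g i))
  (Hlow : exists A, 0 < A /\ forall f, X 0%nat f ->
            Theta (coeffs g f) /\ A * nrm 0%nat f <= thnorm (coeffs g f)) :
  ( (forall s, is_BK (Theta_s X g s) (theta_norm z X nrm g s)) /\
    F_conditions seq0 seqadd seqscal (Theta_s X g) (theta_norm z X nrm g) /\
    is_F_frame add scal X nrm (Theta_s X g) (theta_norm z X nrm g) g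
      (fun _ => 1) (fun _ => 1) ) /\
  ( forall f : nat -> V,
      (forall j, capF X (f j)) ->
      (forall i j, g i (f j) = if Nat.eqb i j then 1 else 0) ->
      forall s, is_CB (Theta_s X g s) (theta_norm z X nrm g s) <->
                is_Schauder_basis z add scal (X s) (nrm s) f ).
Proof.
  destruct HBK as ((Theta_sub & Theta_norm & _) & _).
  destruct Hlow as (A & HA & Hbound).
  assert (Hinj : forall x y, X 0%nat x -> X 0%nat y -> coeffs g x = coeffs g y -> x = y).
  { apply (lower_bound_injective HV seq_vector_space (X_subspace HF 0%nat)
             (coeffs_linear HF Hg 0%nat) (nrm 0%nat) thnorm A).
    - apply (X_Banach HF 0%nat).
    - apply (seq_norm_zero Theta_sub Theta_norm).
    - exact HA.
    - intros f Xf; apply Hbound, Xf. }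
  split; [split; [|split]|].
  - exact (Theta_s_BK HV HF Hg Hinj).
  - exact (Theta_F_conditions HV HF Hg Hinj).
  - exact (coeffs_F_frame HF Hg Hinj).
  - exact (Theta_s_CB_iff HV HF Hg Hinj).
Qed.
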